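(* Let $n\ge k$, $s\ge t \ge 0$ and $1\le \ell \le k-1$ be integers. Suppose that $\mathcal{H} \subset EM(n,k,s,t)$ and $|\mathcal{H}| = m$. Then $|\partial_{\ell}\mathcal{H}|\ge |\partial_{\ell} L_{m}EM(n,k,s,t)|$.
   Context: $[n]=\{1,\dots,n\}$, $\binom{[n]}{k}$ is the family of $k$-subsets of $[n]$. For $0\le t\le\min\{k,s\}$, $EM(n,k,s,t)=\{A\in\binom{[n]}{k}: |A\cap[s]|\ge t\}$; $EM(n,k,s,t)=\emptyset$ if $t>\min\{k,s\}$, and $=\binom{[n]}{k}$ if $n\le s$. $\partial_\ell\mathcal{H}=\{A\in\binom{[n]}{k-\ell}: A\subset B\text{ for some }B\in\mathcal{H}\}$. Colex order: $A\prec B$ iff $\max\big((A\setminus B)\cup(B\setminus A)\big)\in B$; $L_m\mathcal{F}$ is the set of the first $m$ members of $\mathcal{F}$ in colex order. *)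

From mathcomp Require Import all_boot.
Set Implicit Arguments. Unset Strict Implicit. Unset Printing Implicit Defensive.

(* Ground set [n] = {1,...,n} is modelled by 'I_n, where ordinal i stands for i+1.
   Hence [s] (intersected with [n]) is the set of ordinals i with i < s. *)

Definition initseg (n s : nat) : {set 'I_n} := [set i : 'I_n | i < s].

Definition EM (n k s t : nat) : {set {set 'I_n}} :=
  [set A : {set 'I_n} | (#|A| == k) && (t <= #|A :&: initseg n s|)].

Definition shadow (n k l : nat) (H : {set {set 'I_n}}) : {set {set 'I_n}} :=
  [set B : {set 'I_n} | (#|B| == k - l) && [exists A in H, B \subset A]].

(* Colex order: A < B iff the maximum of the symmetric difference lies in B,
   i.e. there is x in B \ A such that A and B agree on all elements above x. *)
Definition colex_lt (n : nat) (A B : {set 'I_n}) : bool :=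
  [exists x in B :\: A, [forall y : 'I_n, (x < y) ==> ((y \in A) == (y \in B))]].

Definition colex_init (n : nat) (m : nat) (F : {set {set 'I_n}}) : {set {set 'I_n}} :=
  [set A in F | #|[set B in F | colex_lt B A]| < m].

From mathcomp Require Import all_boot zify.
Set Implicit Arguments. Unset Strict Implicit. Unset Printing Implicit Defensive.

(* The case l = 1 is proved for the subfamilies EM_ge p k t of members with
   all elements >= p, by downward induction on p.
   Compress H towards p until it is shifted.  The shadow of a shifted family
   is then the disjoint union of its link at p and of p added to the shadow of
   that link, and the colex initial segment U has the same structure.  If the
   link of U is not larger than that of H, induction applies to the links.
   Otherwise the part of H avoiding p is larger than that of U, so an initial
   segment V of EM_ge (p+1) k t of that size contains a set c outside U; every
   B in the link of U satisfies p |: B < c in colex, hence lies in the shadow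
   of V, whose size is at most |shadow (H avoiding p)| <= |link H| by
   induction: a contradiction.  General l follows by iteration, as the shadow
   of a colex initial segment of EM_ge p k t is one of EM_ge p (k-1) (t-1). *)

Section Colex.
Variable n : nat.
Implicit Types (A B C D E : {set 'I_n}) (F G U V : {set {set 'I_n}}).

Lemma colexP A B : reflect (exists x : 'I_n, [/\ x \in B, x \notin A &
   forall y : 'I_n, x < y -> (y \in A) = (y \in B)]) (colex_lt A B).
Proof.
apply: (iffP existsP) => [[x /andP[xBA /forallP agree]]|[x [xB xA agree]]].
- exists x; move: xBA; rewrite inE => /andP[-> ->]; split=> // y xy.
  by move: (agree y); rewrite xy => /eqP.
- exists x; rewrite inE xB xA /=; apply/forallP=> y; apply/implyP=> xy.
  by rewrite agree.
Qed.

Lemma colex_ltxx A : ~~ colex_lt A A.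
Proof. by apply/colexP => -[x [-> /negP]]. Qed.

Lemma colex_lt_trans A B C : colex_lt A B -> colex_lt B C -> colex_lt A C.
Proof.
move=> /colexP[x [xB xA agAB]] /colexP[y [yC yB agBC]].
apply/colexP; case: (ltngtP x y) => [xy|yx|/val_inj exy].
- exists y; split=> //; first by rewrite agAB.
  by move=> z yz; rewrite agAB ?agBC //; apply: ltn_trans yz.
- exists x; split=> //; first by rewrite -agBC.
  by move=> z xz; rewrite agAB ?agBC //; apply: ltn_trans xz.
- by rewrite -exy xB in yB.
Qed.

Lemma colex_lt_total A B : A != B -> colex_lt A B || colex_lt B A.
Proof.
move=> neqAB; set S := (A :\: B) :|: (B :\: A).
have [x0 x0S] : exists x, x \in S.
  apply/set0Pn; apply: contra neqAB => /eqP S0; apply/eqP/setP=> y.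
  apply/idP/idP=> y_in; apply/negPn/negP=> y_out;
  by move: (in_set0 y); rewrite -S0 !inE y_in y_out.
case: (arg_maxnP val x0S) => x xS xmax.
have agree (y : 'I_n) : x < y -> (y \in A) = (y \in B).
  move=> xy; apply/idP/idP=> y_in; apply/negPn/negP=> y_out;
  (have yS : y \in S by rewrite /S !inE y_in y_out ?orbT);
  by have := xmax y yS; rewrite /= leqNgt xy.
have {xS} : x \in S := xS.
rewrite /S !inE => /orP[/andP[xB xA]|/andP[xA xB]].
- by apply/orP; right; apply/colexP; exists x; split=> // y /agree ->.
- by apply/orP; left; apply/colexP; exists x.
Qed.

Lemma proper_colex_lt B A : B \proper A -> colex_lt B A.
Proof.
rewrite properEneq => /andP[neqBA BA].
case/orP: (colex_lt_total neqBA) => // /colexP[x [xB xA _]].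
by rewrite (subsetP BA _ xB) in xA.
Qed.

Lemma colex_lt_setU1 x A B :
  x \notin A -> x \notin B -> colex_lt A B -> colex_lt (x |: A) (x |: B).
Proof.
move=> xA xB /colexP[y [yB yA agree]]; apply/colexP; exists y; split.
- by rewrite setU1r.
- by rewrite !inE negb_or yA andbT; apply: contraNneq xB => <-.
- by move=> z yz; rewrite !inE agree.
Qed.

Lemma colex_lt_shift (i j : 'I_n) A :
  i < j -> j \in A -> i \notin A -> colex_lt (i |: (A :\ j)) A.
Proof.
move=> ij jA iA; apply/colexP; exists j; split=> //.
- by rewrite !inE eqxx /= orbF; apply: contraNneq iA => <-.
- move=> y jy; have yj : y != j by rewrite neq_ltn jy orbT.
  have yi : y != i by rewrite neq_ltn (ltn_trans ij jy) orbT.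
  by rewrite !inE (negbTE yj) (negbTE yi).
Qed.

Lemma colex_fill E C : colex_lt E C -> #|C| = #|E|.+1 ->
  exists2 w, w \in C :\: E &
    ((w |: E == C) || colex_lt (w |: E) C) /\ {in C, forall y : 'I_n, y < w -> y \in E}.
Proof.
move=> /colexP[x [xC xE agree]] cardC.
have xCE : x \in C :\: E by rewrite inE xE.
case: (arg_minnP val xCE) => w wCE wmin.
have below : {in C, forall y : 'I_n, y < w -> y \in E}.
  move=> y yC yw; apply/negPn/negP => yE.
  have yCE : y \in C :\: E by rewrite inE yE yC.
  by have := wmin y yCE; rewrite leqNgt yw.
exists w => //; split=> //; have {wCE} : w \in C :\: E := wCE.
rewrite inE => /andP[wE wC].
case: (ltngtP w x) => [wx|xw|/val_inj wx].
- apply/orP; right; apply/colexP; exists x; split=> //.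
  + by rewrite !inE negb_or xE andbT neq_ltn wx orbT.
  + move=> y xy; rewrite !inE agree //.
    by have -> : (y == w) = false by apply/negbTE; rewrite neq_ltn (ltn_trans wx xy) orbT.
- by have := wmin x xCE; rewrite leqNgt xw.
- apply/orP; left; rewrite eq_sym eqEcard cardsU1 wE cardC leqnn andbT.
  apply/subsetP=> y yC; rewrite in_setU1.
  case: (ltngtP y w) => [yw|wy|/val_inj ->]; last by rewrite eqxx.
  + by rewrite below ?orbT.
  + by rewrite agree -?wx // yC orbT.
Qed.

Definition colex_rank F A := #|[set B in F | colex_lt B A]|.

Lemma colex_initE m F A :
  (A \in colex_init m F) = (A \in F) && (colex_rank F A < m).
Proof. by rewrite inE. Qed.

Lemma colex_rank_lt F A B : A \in F -> colex_lt A B -> colex_rank F A < colex_rank F B.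
Proof.
move=> AF AB; apply: proper_card; apply/properP; split.
- apply/subsetP=> C; rewrite !inE => /andP[-> CA] /=; exact: colex_lt_trans CA AB.
- by exists A; rewrite !inE AF ?AB ?colex_ltxx.
Qed.

Lemma colex_rank_inj F : {in F &, injective (colex_rank F)}.
Proof.
move=> A B AF BF eqAB; apply/eqP; apply: contraT => /colex_lt_total/orP[] lt.
- by have := colex_rank_lt AF lt; rewrite eqAB ltnn.
- by have := colex_rank_lt BF lt; rewrite eqAB ltnn.
Qed.

Lemma leq_card_colex_init m F : #|colex_init m F| <= m.
Proof.
rewrite cardE -(size_map (colex_rank F)) -[X in _ <= X](size_iota 0 m).
apply: uniq_leq_size.
- rewrite map_inj_in_uniq ?enum_uniq // => A B.
  rewrite !mem_enum !colex_initE => /andP[AF _] /andP[BF _].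
  exact: colex_rank_inj.
- move=> r /mapP[A]; rewrite mem_enum colex_initE => /andP[_ lt_m] ->.
  by rewrite mem_iota add0n lt_m.
Qed.

Lemma card_colex_init m F : m <= #|F| -> #|colex_init m F| = m.
Proof.
move=> mF; apply/eqP; rewrite eqn_leq leq_card_colex_init leqNgt; apply/negP => small.
have [c0 c0F c0L] : exists2 c, c \in F & c \notin colex_init m F.
  by apply/subsetPn; apply: contraTN small => /subset_leq_card; rewrite -leqNgt => /(leq_trans mF).
have c0FL : c0 \in F :\: colex_init m F by rewrite inE c0L.
case: (arg_minnP (colex_rank F) c0FL) => c cFL cmin.
have {cFL} : c \in F :\: colex_init m F := cFL.
rewrite inE => /andP[cL cF].
have : colex_rank F c <= #|colex_init m F|.
  apply/subset_leq_card/subsetP=> B; rewrite inE => /andP[BF Bc].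
  apply: contraLR Bc => BL; have BFL : B \in F :\: colex_init m F by rewrite inE BL.
  by apply/negP => Bc; have := cmin B BFL; rewrite leqNgt (colex_rank_lt BF Bc).
by move=> /leq_ltn_trans/(_ small) cm; rewrite colex_initE cF cm in cL.
Qed.

Definition colex_initial F G :=
  G \subset F /\ {in G & F, forall A B, colex_lt B A -> B \in G}.

Lemma colex_init_initial m F : colex_initial F (colex_init m F).
Proof.
split; first by apply/subsetP=> A; rewrite colex_initE => /andP[].
move=> A B; rewrite !colex_initE => /andP[AF Am] BF BA; rewrite BF.
exact: ltn_trans (colex_rank_lt BF BA) Am.
Qed.

End Colex.

Lemma card_lt_notin (T : finType) (A B : {set T}) :
  #|B| < #|A| -> exists2 x, x \in A & x \notin B.
Proof.
by move=> lt; apply/subsetPn; apply: contraTN lt => /subset_leq_card; rewrite -leqNgt.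
Qed.

Section Shadow.
Variable n : nat.
Implicit Types (A B C : {set 'I_n}) (G H U : {set {set 'I_n}}).

Lemma shadowP k l H B :
  reflect (#|B| = k - l /\ exists2 A, A \in H & B \subset A) (B \in shadow k l H).
Proof.
rewrite inE; apply: (iffP andP) => [[/eqP -> /existsP[A /andP[AH BA]]]|[-> [A AH BA]]].
- by split=> //; exists A.
- by split=> //; apply/existsP; exists A; rewrite AH.
Qed.

Lemma shadowS k l G H : G \subset H -> shadow k l G \subset shadow k l H.
Proof.
move=> GH; apply/subsetP=> B /shadowP[cB [A AG BA]]; apply/shadowP; split=> //.
by exists A => //; apply: (subsetP GH).
Qed.

Lemma shadow0 k H : {in H, forall A, #|A| = k} -> shadow k 0 H = H.
Proof.
move=> Hk; apply/setP=> B; apply/shadowP/idP => [[cB [A AH BA]]|BH].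
- suff -> : B = A by [].
  by apply/eqP; rewrite eqEcard BA cB (Hk _ AH) subn0 leqnn.
- by split; [rewrite subn0 Hk | exists B].
Qed.

Lemma shadow_shadow1 k l H : 0 < k -> {in H, forall A, #|A| = k} ->
  shadow (k - 1) l (shadow k 1 H) = shadow k l.+1 H.
Proof.
move=> k_gt0 Hk; apply/setP=> B; apply/shadowP/shadowP.
- case=> cB [C /shadowP[_ [A AH CA]] BC]; split; first by rewrite cB; lia.
  by exists A => //; apply: subset_trans BC CA.
- case=> cB [A AH BA]; have cA := Hk A AH.
  have [x xA xB] : exists2 x, x \in A & x \notin B.
    by apply: card_lt_notin; rewrite cB cA; lia.
  split; first by rewrite cB; lia.
  exists (A :\ x); last by rewrite subsetD1 BA xB.
  apply/shadowP; split; last by exists A; rewrite ?subD1set.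
  by move: cA; rewrite (cardsD1 x A) xA; lia.
Qed.

Lemma shadow_set0 k l : shadow k l (set0 : {set {set 'I_n}}) = set0.
Proof. by apply/setP=> B; rewrite in_set0; apply/shadowP=> -[_ [A]]; rewrite in_set0. Qed.

Lemma leq_card_shadow1_small k U H :
  k <= 1 -> #|U| <= #|H| -> #|shadow k 1 U| <= #|shadow k 1 H|.
Proof.
move=> k1 UH; have [->|/set0Pn[A AU]] := eqVneq U set0.
  by rewrite shadow_set0 cards0.
have [B BH] : exists B, B \in H.
  by apply/set0Pn; rewrite -card_gt0; apply: leq_trans UH; rewrite card_gt0; apply/set0Pn; exists A.
have small G : shadow k 1 G \subset [set set0].
  by apply/subsetP=> C /shadowP[cC _]; rewrite inE -cards_eq0 cC; lia.
apply: leq_trans (subset_leq_card (small U)) _; rewrite cards1 card_gt0.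
apply/set0Pn; exists set0; apply/shadowP; split; first by rewrite cards0; lia.
by exists B; rewrite ?sub0set.
Qed.

End Shadow.

Section Compression.
Variables (n : nat) (i j : 'I_n).
Implicit Types (A B : {set 'I_n}) (F P : {set {set 'I_n}}).

Definition shift A := if (j \in A) && (i \notin A) then i |: (A :\ j) else A.

Definition compress F :=
  [set shift A | A in F & shift A \notin F] :|: [set A in F | shift A \in F].

Lemma shift_id A : ~~ ((j \in A) && (i \notin A)) -> shift A = A.
Proof. by rewrite /shift => /negbTE ->. Qed.

Lemma shift_moved A : j \in A -> i \notin A -> shift A = i |: (A :\ j).
Proof. by rewrite /shift => -> ->. Qed.

Lemma shift_neq A : j \in A -> i \notin A -> i != j.
Proof. by move=> jA; apply: contraNneq => ->. Qed.

Lemma shiftK A : j \in A -> i \notin A -> j |: (shift A :\ i) = A.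
Proof.
move=> jA iA; rewrite shift_moved // setU1K ?setD1K //.
by rewrite in_setD1 (negbTE iA) andbF.
Qed.

Lemma card_shift A : #|shift A| = #|A|.
Proof.
have [/andP[jA iA]|moved] := boolP ((j \in A) && (i \notin A)); last by rewrite shift_id.
rewrite shift_moved // cardsU1 in_setD1 (negbTE iA) andbF (cardsD1 j A) jA.
by rewrite add1n.
Qed.

Lemma shift_subset A B : B \subset A -> (shift B \subset A) || (shift B \subset shift A).
Proof.
move=> BA; have [/andP[jB iB]|fixed] := boolP ((j \in B) && (i \notin B));
  last by rewrite shift_id // BA.
have jA : j \in A := subsetP BA j jB.
have [iA|iA] := boolP (i \in A).
  apply/orP; left; rewrite (shift_moved jB iB) subUset sub1set iA.
  exact: subset_trans (subD1set B j) BA.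
by rewrite !shift_moved // setUS ?orbT // setSD.
Qed.

Lemma compressP F A : reflect (A \in F /\ shift A \in F \/
    exists2 A0, A0 \in F & shift A0 \notin F /\ A = shift A0) (A \in compress F).
Proof.
apply: (iffP setUP) => [[/imsetP[A0]|]|[[AF sAF]|[A0 A0F [sA0F ->]]]].
- by rewrite inE => /andP[A0F sA0F] ->; right; exists A0.
- by rewrite inE => /andP[AF sAF]; left.
- by right; rewrite inE AF.
- by left; apply/imsetP; exists A0; rewrite ?inE ?A0F.
Qed.

Lemma card_compress F : #|compress F| = #|F|.
Proof.
set Fout := [set A in F | shift A \notin F]; set Fin := [set A in F | shift A \in F].
have inj : {in Fout &, injective shift}.
  move=> A B; rewrite !inE => /andP[AF sAF] /andP[BF sBF] eqAB.
  have [/andP[jA iA]|] := boolP ((j \in A) && (i \notin A)); last first.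
    by move/shift_id=> eqA; rewrite eqA AF in sAF.
  have [/andP[jB iB]|] := boolP ((j \in B) && (i \notin B)); last first.
    by move/shift_id=> eqB; rewrite eqB BF in sBF.
  by rewrite -(shiftK jA iA) -(shiftK jB iB) eqAB.
have disj : [disjoint shift @: Fout & Fin].
  rewrite -setI_eq0; apply/eqP/setP=> C; rewrite !inE.
  apply/negP=> /andP[/imsetP[A]]; rewrite inE => /andP[_ sAF] -> /andP[sAF' _].
  by rewrite sAF' in sAF.
rewrite /compress cardsU (disjoint_setI0 disj) cards0 subn0.
rewrite card_in_imset // -(cardsID [set A | shift A \in F] F) addnC.
by congr (_ + _); apply: eq_card => A; rewrite !inE // andbC.
Qed.

Lemma compress_sub P F : {in P, forall A, shift A \in P} -> F \subset P -> compress F \subset P.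
Proof.
move=> shiftP FP; apply/subsetP=> A /compressP[[AF _]|[A0 A0F [_ ->]]].
- exact: (subsetP FP).
- exact/shiftP/(subsetP FP).
Qed.

Lemma shadow_compress_fixed k F A B : A \in F -> shift A \in F -> B \subset A ->
  #|B| = k - 1 -> B \in compress (shadow k 1 F).
Proof.
move=> AF sAF BA cB; apply/compressP; left; split; first by apply/shadowP; split=> //; exists A.
apply/shadowP; split; first by rewrite card_shift.
by case/orP: (shift_subset BA); [exists A | exists (shift A)].
Qed.

Lemma shadow_compress_moved k F A B : A \in F -> shift A \notin F -> B \subset shift A ->
  #|B| = k - 1 -> B \in compress (shadow k 1 F).
Proof.
move=> AF sAF BsA cB.
have [/andP[jA iA]|] := boolP ((j \in A) && (i \notin A)); last first.
  by move/shift_id=> eqA; rewrite eqA AF in sAF.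
have ij := shift_neq jA iA.
move: BsA; rewrite shift_moved // => BsA.
have jB : j \notin B.
  by apply/negP => /(subsetP BsA); rewrite !inE eqxx /= orbF eq_sym (negbTE ij).
have [iB|iB] := boolP (i \in B); last first.
  have BA : B \subset A.
    apply/subsetP=> x xB; move: (subsetP BsA x xB); rewrite !inE.
    by case/orP=> [/eqP ex|/andP[]//]; rewrite -ex xB in iB.
  have BF : B \in shadow k 1 F by apply/shadowP; split=> //; exists A.
  by apply/compressP; left; rewrite shift_id // negb_and jB.
set B0 := j |: (B :\ i).
have B0A : B0 \subset A.
  rewrite subUset sub1set jA; apply/subsetP=> x; rewrite in_setD1 => /andP[xi xB].
  by move: (subsetP BsA x xB); rewrite !inE (negbTE xi) => /andP[].
have jB0 : j \in B0 by rewrite setU11.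
have iB0 : i \notin B0 by rewrite !inE negb_or ij eqxx.
have sB0 : shift B0 = B.
  by rewrite shift_moved // setU1K ?setD1K // in_setD1 (negbTE jB) andbF.
have B0F : B0 \in shadow k 1 F.
  apply/shadowP; split; last by exists A.
  by rewrite -cB -sB0 card_shift.
apply/compressP; have [BF|BF] := boolP (B \in shadow k 1 F).
- by left; rewrite shift_id // iB andbF.
- by right; exists B0; rewrite ?sB0.
Qed.

Lemma shadow_compress k F : shadow k 1 (compress F) \subset compress (shadow k 1 F).
Proof.
apply/subsetP=> B /shadowP[cB [A' /compressP[[A'F sA'F]|[A AF [sAF ->]]] BA']].
- exact: shadow_compress_fixed A'F sA'F BA' cB.
- exact: shadow_compress_moved AF sAF BA' cB.
Qed.

Lemma card_compress_contain F A : A \in F -> j \in A -> i \notin A -> shift A \notin F ->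
  #|[set B in F | i \in B]| < #|[set B in compress F | i \in B]|.
Proof.
move=> AF jA iA sAF; apply: proper_card; apply/properP; split.
- apply/subsetP=> B /setIdP[BF iB]; apply/setIdP; split=> //.
  by apply/compressP; left; rewrite shift_id ?iB ?andbF.
- exists (shift A); last by rewrite inE (negbTE sAF).
  apply/setIdP; split; last by rewrite shift_moved // setU11.
  by apply/compressP; right; exists A.
Qed.

End Compression.

Section Shifted.
Variables (n : nat) (i : 'I_n).
Implicit Types (G H P : {set {set 'I_n}}).

Definition shifted (G : {set {set 'I_n}}) :=
  forall A (j : 'I_n), A \in G -> j \in A -> i \notin A -> i |: (A :\ j) \in G.

(* Take G maximizing the number of members containing i: a compression that
   changes G would contain i more often without enlarging the shadow. *)
Lemma exists_shifted k P H :
  (forall j, {in P, forall A, shift i j A \in P}) -> H \subset P ->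
  exists G, [/\ G \subset P, #|G| = #|H|, #|shadow k 1 G| <= #|shadow k 1 H| & shifted G].
Proof.
move=> shiftP HP.
pose ok G := [&& G \subset P, #|G| == #|H| & #|shadow k 1 G| <= #|shadow k 1 H|].
have okH : ok H by rewrite /ok HP eqxx leqnn.
case: (arg_maxnP (fun G => #|[set A in G | i \in A]|) okH) => G /and3P[GP /eqP cG sG] Gmax.
exists G; split=> // A j AG jA iA; apply: contraT => nAG.
have : ok (compress i j G).
  rewrite /ok compress_sub // card_compress cG eqxx /=.
  apply: leq_trans sG; rewrite -(card_compress i j (shadow k 1 G)).
  exact/subset_leq_card/shadow_compress.
move/Gmax; rewrite /= leqNgt => /negbTE <-.
by apply: (card_compress_contain AG jA iA); rewrite (shift_moved jA iA).
Qed.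

End Shifted.

Section Link.
Variables (n : nat) (i : 'I_n).
Implicit Types (A B : {set 'I_n}) (G H : {set {set 'I_n}}).

Definition del G := [set A in G | i \notin A].

Definition link G := [set A :\ i | A in G & i \in A].

Lemma linkP G B : reflect (i \notin B /\ i |: B \in G) (B \in link G).
Proof.
apply: (iffP imsetP) => [[A]|[iB BG]].
- rewrite inE => /andP[AG iA] ->; split; first by rewrite !inE eqxx.
  by rewrite setD1K.
- by exists (i |: B); [rewrite inE BG setU11 | rewrite setU1K].
Qed.

Lemma card_del_link G : #|G| = #|del G| + #|link G|.
Proof.
rewrite /link card_in_imset.
- rewrite -(cardsID [set A : {set 'I_n} | i \in A] G) addnC.
  by congr (_ + _); apply: eq_card => A; rewrite !inE andbC.
- move=> A B; rewrite !inE => /andP[_ iA] /andP[_ iB] eqAB.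
  by rewrite -(setD1K iA) -(setD1K iB) eqAB.
Qed.

Lemma shadow1P k H B : 0 < k -> {in H, forall A, #|A| = k} ->
  B \in shadow k 1 H -> exists2 x, x \notin B & x |: B \in H.
Proof.
move=> k_gt0 Hk /shadowP[cB [A AH BA]]; have cA := Hk A AH.
have [x xA xB] : exists2 x, x \in A & x \notin B.
  by apply: card_lt_notin; rewrite cA cB; lia.
exists x => //; suff -> : x |: B = A by [].
by apply/eqP; rewrite eqEcard subUset sub1set xA BA cardsU1 xB cA cB; lia.
Qed.

Lemma link_shadow k G : 1 < k -> link (shadow k 1 G) = shadow (k - 1) 1 (link G).
Proof.
move=> k_gt1; apply/setP=> B; apply/linkP/shadowP.
- case=> iB /shadowP[cB [A AG BA]].
  rewrite cardsU1 iB in cB; split; first by lia.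
  have iA : i \in A by rewrite (subsetP BA) ?setU11.
  exists (A :\ i); first by apply/linkP; rewrite setD1K // !inE eqxx.
  by rewrite subsetD1 iB (subset_trans (subsetUr _ _) BA).
- case=> cB [A /linkP[iA AG] BA].
  have iB : i \notin B by apply: contra iA; apply: (subsetP BA).
  split=> //; apply/shadowP; split; first by rewrite cardsU1 iB cB; lia.
  by exists (i |: A); rewrite ?setUS.
Qed.

Lemma del_shadow k G : 0 < k -> {in G, forall A, #|A| = k} -> shifted i G ->
  del (shadow k 1 G) = link G.
Proof.
move=> k_gt0 Gk Gsh; apply/setP=> B; apply/setIdP/linkP.
- case=> BG iB; split=> //; have [x xB xBG] := shadow1P k_gt0 Gk BG.
  have [<- //|xi] := eqVneq x i.
  have iA : i \notin x |: B by rewrite !inE negb_or iB eq_sym xi.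
  by have := Gsh _ x xBG (setU11 _ _) iA; rewrite setU1K.
- case=> iB BG; split=> //; apply/shadowP; split; last by exists (i |: B); rewrite ?subsetUr.
  by have := Gk _ BG; rewrite cardsU1 iB; lia.
Qed.

Lemma shadow_del k G : shadow k 1 (del G) \subset del (shadow k 1 G).
Proof.
apply/subsetP=> B BdG; apply/setIdP; split.
  by apply: subsetP BdG; apply/shadowS/subsetP=> A /setIdP[].
case/shadowP: BdG => _ [A /setIdP[_ iA] BA].
by apply: contra iA; apply: (subsetP BA).
Qed.

Lemma card_shadow_shifted k G : 1 < k -> {in G, forall A, #|A| = k} -> shifted i G ->
  #|shadow k 1 G| = #|link G| + #|shadow (k - 1) 1 (link G)|.
Proof.
move=> k_gt1 Gk Gsh.
by rewrite (card_del_link (shadow k 1 G)) del_shadow ?link_shadow //; lia.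
Qed.

End Link.

Section EMge.
Variables n s : nat.
Local Notation X := (initseg n s).
Implicit Types (A B C E : {set 'I_n}) (G H U V : {set {set 'I_n}}).

Definition EM_ge (p k t : nat) : {set {set 'I_n}} :=
  [set A : {set 'I_n} | [&& #|A| == k, [forall x in A, p <= x] & t <= #|A :&: X|]].

Lemma EM_geP p k t A : reflect [/\ #|A| = k, {in A, forall x : 'I_n, p <= x} & t <= #|A :&: X|]
  (A \in EM_ge p k t).
Proof.
rewrite inE; apply: (iffP and3P) => [[/eqP -> /forallP ge ->]|[-> ge ->]]; split=> //.
- by move=> x xA; move: (ge x); rewrite xA.
- by apply/forallP=> x; apply/implyP; apply: ge.
Qed.

Lemma EM_ge0 k t : EM n k s t = EM_ge 0 k t.
Proof.
apply/setP=> A; apply/idP/EM_geP; rewrite inE.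
- by case/andP=> /eqP.
- by case=> -> _ ->; rewrite eqxx.
Qed.

Lemma EM_ge_uniform p k t G : G \subset EM_ge p k t -> {in G, forall A, #|A| = k}.
Proof. by move=> GF A /(subsetP GF)/EM_geP[]. Qed.

Lemma card_setU1I (x : 'I_n) A : #|(x |: A) :&: X| = ((x < s) && (x \notin A)) + #|A :&: X|.
Proof.
have [xs|xs] := ltnP x s.
- have -> : (x |: A) :&: X = x |: (A :&: X).
    by apply/setP=> y; rewrite !inE; case: eqP => [->|] //=; rewrite xs.
  by rewrite cardsU1 !inE xs andbT.
- have -> : (x |: A) :&: X = A :&: X.
    by apply/setP=> y; rewrite !inE; case: eqP => [->|] //=; rewrite [x < s]ltnNge xs andbF.
  by [].
Qed.


Lemma shadow_EM_ge p k t H : 0 < k -> H \subset EM_ge p k t ->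
  shadow k 1 H \subset EM_ge p (k - 1) (t - 1).
Proof.
move=> k_gt0 HF; apply/subsetP=> B BH.
have [x xB xBH] := shadow1P k_gt0 (EM_ge_uniform HF) BH.
have /EM_geP[cA geA tA] := subsetP HF _ xBH.
apply/EM_geP; split.
- by case/shadowP: BH.
- by move=> y yB; apply: geA; rewrite setU1r.
- by move: tA; rewrite card_setU1I; case: (_ && _) => /=; lia.
Qed.

Lemma setU1_EM_ge_succ (i : 'I_n) k t B : 0 < k ->
  (i |: B \in EM_ge i k t) && (i \notin B) = (B \in EM_ge i.+1 (k - 1) (t - (i < s))).
Proof.
move=> k_gt0; apply/andP/EM_geP => [[/EM_geP[cA geA tA] iB]|[cB gtB tB]].
- rewrite cardsU1 iB in cA; rewrite card_setU1I iB andbT in tA; split.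
  + by lia.
  + move=> x xB; rewrite ltn_neqAle geA ?setU1r // andbT.
    by apply: contraNneq iB => /val_inj ->.
  + by case: (i < s) tA => /=; lia.
- have iB : i \notin B by apply/negP => /gtB; rewrite ltnn.
  split=> //; apply/EM_geP; split.
  + by rewrite cardsU1 iB cB; lia.
  + by move=> x /setU1P[-> // | /gtB /ltnW].
  + by rewrite card_setU1I iB andbT; case: (i < s) tB => /=; lia.
Qed.

Lemma del_EM_ge (i : 'I_n) k t G : G \subset EM_ge i k t -> del i G \subset EM_ge i.+1 k t.
Proof.
move=> GF; apply/subsetP=> A /setIdP[/(subsetP GF)/EM_geP[cA geA tA] iA].
apply/EM_geP; split=> // x xA; rewrite ltn_neqAle geA // andbT.
by apply: contraNneq iA => /val_inj ->.
Qed.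

Lemma link_EM_ge (i : 'I_n) k t G : 0 < k -> G \subset EM_ge i k t ->
  link i G \subset EM_ge i.+1 (k - 1) (t - (i < s)).
Proof.
move=> k_gt0 GF; apply/subsetP=> B /linkP[iB BG].
by rewrite -setU1_EM_ge_succ // (subsetP GF _ BG).
Qed.

Lemma shift_EM_ge (i j : 'I_n) k t : {in EM_ge i k t, forall A, shift i j A \in EM_ge i k t}.
Proof.
move=> A AF; have /EM_geP[cA geA tA] := AF.
have [/andP[jA iA]|] := boolP ((j \in A) && (i \notin A)); last by move/shift_id ->.
have ij : i < j by rewrite ltn_neqAle geA // andbT; apply: contraNneq iA => /val_inj ->.
apply/EM_geP; split; first by rewrite card_shift.
  by rewrite shift_moved // => x /setU1P[-> // | /setD1P[_ /geA]].
move: tA; rewrite shift_moved // -{1}(setD1K jA) !card_setU1I !in_setD1 eqxx (negbTE iA) andbF /=.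
case: (ltnP j s) => js; rewrite ?(ltn_trans ij js) // add0n => /leq_trans; apply.
exact: leq_addl.
Qed.

(* E is covered by w |: E, where w is the least element of C outside E. *)
Lemma shadow_fill p k t V E C : colex_initial (EM_ge p k t) V -> C \in V ->
  colex_lt E C -> #|E|.+1 = k -> {in E, forall x : 'I_n, p <= x} ->
  t <= #|E :&: X|.+1 -> E \in shadow k 1 V.
Proof.
case=> VF Vdown CV EC cE geE tE.
have /EM_geP[cC geC tC] := subsetP VF C CV.
have [w /setDP[wC wE] [le_wE_C below]] := colex_fill EC (etrans cC (esym cE)).
have wEF : w |: E \in EM_ge p k t.
  apply/EM_geP; split.
  - by rewrite cardsU1 wE.
  - by move=> x /setU1P[-> | /geE //]; apply: geC.
  - rewrite card_setU1I wE andbT; case: (ltnP w s) => ws; first by rewrite add1n.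
    apply: leq_trans tC (subset_leq_card _); apply/subsetP=> y /setIP[yC yX].
    by rewrite inE yX below // (leq_trans _ ws) //; move: yX; rewrite inE.
have wEV : w |: E \in V by case/orP: le_wE_C => [/eqP -> // | lt]; apply: Vdown lt.
apply/shadowP; split; first by lia.
by exists (w |: E); rewrite ?subsetUr.
Qed.

Lemma shadow_colex_initial p k t T : 0 < k -> colex_initial (EM_ge p k t) T ->
  colex_initial (EM_ge p (k - 1) (t - 1)) (shadow k 1 T).
Proof.
move=> k_gt0 Tini; case: (Tini) => TF _; split; first exact: shadow_EM_ge.
move=> B B' /shadowP[cB [A AT BA]] /EM_geP[cB' geB' tB'] B'B.
have /EM_geP[cA _ _] := subsetP TF A AT.
have BA' : B \proper A by rewrite properEcard BA cA cB; lia.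
apply: shadow_fill Tini AT (colex_lt_trans B'B (proper_colex_lt BA')) _ geB' _; lia.
Qed.

Lemma link_colex_initial (i : 'I_n) k t U : 0 < k -> colex_initial (EM_ge i k t) U ->
  colex_initial (EM_ge i.+1 (k - 1) (t - (i < s))) (link i U).
Proof.
move=> k_gt0 [UF Udown]; split; first exact: link_EM_ge.
move=> B B' /linkP[iB BU] B'F B'B; apply/linkP.
move: B'F; rewrite -setU1_EM_ge_succ // => /andP[B'F iB']; split=> //.
exact: Udown BU B'F (colex_lt_setU1 iB' iB B'B).
Qed.

Lemma colex_initial_shifted (i : 'I_n) k t U : colex_initial (EM_ge i k t) U -> shifted i U.
Proof.
case=> UF Udown A j AU jA iA; have AF := subsetP UF A AU.
have /EM_geP[_ geA _] := AF.
have ij : i < j by rewrite ltn_neqAle geA // andbT; apply: contraNneq iA => /val_inj ->.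
rewrite -(shift_moved jA iA); apply: Udown AU (shift_EM_ge j AF) _.
by rewrite shift_moved //; apply: colex_lt_shift.
Qed.

(* i |: B precedes c in colex, so filling B from above i stays below c. *)
Lemma link_sub_shadow (i : 'I_n) k t U V c : colex_initial (EM_ge i k t) U ->
  colex_initial (EM_ge i.+1 k t) V -> c \in V -> c \notin U -> link i U \subset shadow k 1 V.
Proof.
move=> [UF Udown] Vini cV cU; apply/subsetP=> B /linkP[iB BU].
have /EM_geP[cc gec tc] := subsetP Vini.1 c cV.
have cF : c \in EM_ge i k t by apply/EM_geP; split=> // x /gec /ltnW.
have ic : i \notin c by apply/negP => /gec; rewrite ltnn.
have iBc : colex_lt (i |: B) c.
  have neq : i |: B != c by apply: contraNneq ic => <-; rewrite setU11.
  by case/orP: (colex_lt_total neq) => // /(Udown _ _ BU cF); rewrite (negbTE cU).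
have /EM_geP[cA _ _] := subsetP UF _ BU.
have k_gt0 : 0 < k by rewrite -cA cardsU1 iB.
have := @setU1_EM_ge_succ i k t B k_gt0; rewrite (subsetP UF _ BU) iB => /esym/EM_geP[cB geB tB].
have BiB : B \proper i |: B by rewrite properEcard subsetUr cardsU1 iB add1n ltnSn.
apply: shadow_fill Vini cV (colex_lt_trans (proper_colex_lt BiB) iBc) _ geB _.
  by lia.
by case: (i < s) tB => /=; lia.
Qed.

End EMge.

Section KruskalKatona.
Variables n s : nat.
Local Notation EM_ge := (EM_ge n s).
Implicit Types (G H U V : {set {set 'I_n}}).

Definition shadow_minimal p := forall k t U H, H \subset EM_ge p k t ->
  colex_initial (EM_ge p k t) U -> #|U| <= #|H| -> #|shadow k 1 U| <= #|shadow k 1 H|.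

Lemma EM_ge_eq0 p k t : n <= p -> 0 < k -> EM_ge p k t = set0.
Proof.
move=> np k_gt0; apply/setP=> A; rewrite in_set0; apply/negP=> /EM_geP[cA geA _].
have [x xA] : exists x, x \in A by apply/set0Pn; rewrite -card_gt0 cA.
by have := leq_trans np (geA x xA); rewrite leqNgt ltn_ord.
Qed.

Lemma shadow_minimal_ge p : n <= p -> shadow_minimal p.
Proof.
move=> np k t U H _ [UF _] UH; have [k_le1|k_gt1] := leqP k 1.
  exact: leq_card_shadow1_small.
move: UF; rewrite EM_ge_eq0 ?subset0 ?(ltnW k_gt1) // => /eqP ->.
by rewrite shadow_set0 cards0.
Qed.

Lemma shadow_minimal_succ (i : 'I_n) : shadow_minimal i.+1 -> shadow_minimal i.
Proof.
move=> IH k t U H HF Uini UH.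
have [k_le1|k_gt1] := leqP k 1; first exact: leq_card_shadow1_small.
have k_gt0 : 0 < k by lia.
have [G [GF cG sG Gsh]] := exists_shifted k (fun j => @shift_EM_ge n s i j k t) HF.
apply: leq_trans sG.
rewrite (card_shadow_shifted k_gt1 (EM_ge_uniform Uini.1) (colex_initial_shifted Uini)).
rewrite (card_shadow_shifted k_gt1 (EM_ge_uniform GF) Gsh).
have [le_link|lt_link] := leqP #|link i U| #|link i G|.
  apply: leq_add le_link (IH _ (t - (i < s)) _ _ _ _ le_link).
    exact: link_EM_ge.
  exact: link_colex_initial.
have lt_del : #|del i U| < #|del i G|.
  by have := card_del_link i U; have := card_del_link i G; lia.
have delGF := del_EM_ge GF.
set V := colex_init #|del i G| (EM_ge i.+1 k t).
have Vini : colex_initial (EM_ge i.+1 k t) V := colex_init_initial _ _.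
have cardV : #|V| = #|del i G| by apply/card_colex_init/subset_leq_card.
have [c cV c_del] : exists2 c, c \in V & c \notin del i U.
  by apply: card_lt_notin; rewrite cardV.
have cU : c \notin U.
  apply: contra c_del => cU; apply/setIdP; split=> //.
  by have /EM_geP[_ gec _] := subsetP Vini.1 c cV; apply/negP => /gec; rewrite ltnn.
have link_V := subset_leq_card (link_sub_shadow Uini Vini cV cU).
have V_delG := IH k t V (del i G) delGF Vini (eq_leq cardV).
have := shadow_del i k G; rewrite (del_shadow k_gt0 (EM_ge_uniform GF) Gsh).
move=> /subset_leq_card delG_link.
have := leq_trans link_V (leq_trans V_delG delG_link).
by rewrite leqNgt lt_link.
Qed.

Lemma EM_ge_shadow_minimal p : shadow_minimal p.
Proof.
move: {2}(n - p) (leqnn (n - p)) => d; elim: d p => [|d IH] p pd.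
  by apply: shadow_minimal_ge; lia.
have [pn|np] := ltnP p n; last exact: shadow_minimal_ge.
by apply: (@shadow_minimal_succ (Ordinal pn)); apply: IH => /=; lia.
Qed.

Lemma leq_card_shadow_colex_initial p k t l U H : l <= k -> H \subset EM_ge p k t ->
  colex_initial (EM_ge p k t) U -> #|U| <= #|H| -> #|shadow k l U| <= #|shadow k l H|.
Proof.
elim: l k t U H => [|l IH] k t U H lk HF Uini UH.
  by rewrite (shadow0 (EM_ge_uniform HF)) (shadow0 (EM_ge_uniform Uini.1)).
have k_gt0 : 0 < k by lia.
rewrite -(shadow_shadow1 l k_gt0 (EM_ge_uniform HF)).
rewrite -(shadow_shadow1 l k_gt0 (EM_ge_uniform Uini.1)).
apply: (IH _ (t - 1)); first by lia.
- exact: shadow_EM_ge.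
- exact: shadow_colex_initial.
- exact: EM_ge_shadow_minimal HF Uini UH.
Qed.

End KruskalKatona.

Theorem corollary2p6 (n k s t l : nat) (H : {set {set 'I_n}}) :
  k <= n -> t <= s -> 1 <= l -> l <= k - 1 ->
  H \subset EM n k s t ->
  #|shadow k l (colex_init #|H| (EM n k s t))| <= #|shadow k l H|.
Proof.
move=> _ _ _ lk HEM; rewrite EM_ge0 in HEM *.
apply: leq_card_shadow_colex_initial HEM (colex_init_initial _ _) (leq_card_colex_init _ _).
by lia.
Qed.
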